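(* Let $\mathcal{A}=(Q,A,\delta,q_0,F)$ be a semi-flower automaton and let $b\in A$. If the cycle formed by the $b$-edges of $\mathcal{A}$ has length $1$, then $\mathcal{A}$ is synchronizing.
   Context: An automaton over a finite alphabet $A$ is a quintuple $\mathcal{A}=(Q,A,\delta,q_0,F)$ with $Q$ a non-empty finite set of states, initial state $q_0\in Q$, set of final states $F\subseteq Q$, and total transition function $\delta:Q\times A\to Q$, extended to words in the usual way. Its digraph has vertex set $Q$ and, for each $p\in Q$, $a\in A$, an edge labeled $a$ (an $a$-edge) from $p$ to $\delta(p,a)$. A path is an alternating sequence of distinct vertices and edges, each edge going from the preceding vertex to the next; a cycle is a path with at least one edge whose initial and terminal vertices coincide. A state $q$ is accessible if there is a path from $q_0$ to $q$, and co-accessible if there is a path from $q$ to a final state. $\mathcal{A}$ is a semi-flower automaton if $F=\{q_0\}$, every state is accessible and co-accessible, and every cycle passes through $q_0$. In a semi-flower automaton, the sub-digraph formed by the $b$-edges (for a fixed letter $b$) contains exactly one cycle, called the $b$-cycle. $\mathcal{A}$ is synchronizing if there is a word $w\in A^*$ such that $\{\delta(q,w): q\in Q\}$ is a singleton. *)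

From mathcomp Require Import all_boot.
Set Implicit Arguments. Unset Strict Implicit. Unset Printing Implicit Defensive.

Section Automata.
Variables (Q A : finType) (delta : Q -> A -> Q).

Definition delta_star (q : Q) (w : seq A) : Q := foldl delta q w.

(* A walk from p to q in the digraph: a sequence of edges, each edge given
   by its source state and label (r, a), representing r --a--> delta r a. *)
Fixpoint walk (p : Q) (s : seq (Q * A)) (q : Q) : bool :=
  match s with
  | [::] => p == q
  | (r, a) :: s' => (r == p) && walk (delta r a) s' q
  end.

Definition is_path (p : Q) (s : seq (Q * A)) (q : Q) : bool :=
  walk p s q && uniq (rcons (map fst s) q).

Definition is_cycle (s : seq (Q * A)) : bool :=
  match s with
  | [::] => false
  | (p, _) :: _ => walk p s p && uniq (map fst s)
  end.

Definition accessible (q0 q : Q) : Prop := exists s, is_path q0 s q.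
Definition coaccessible (F : {set Q}) (q : Q) : Prop :=
  exists s f, f \in F /\ is_path q s f.

Definition semi_flower (q0 : Q) (F : {set Q}) : Prop :=
  [/\ F = [set q0],
      forall q, accessible q0 q,
      forall q, coaccessible F q &
      forall s, is_cycle s -> q0 \in map fst s].

Definition b_cycle (b : A) (s : seq (Q * A)) : bool :=
  is_cycle s && all (fun e => e.2 == b) s.

Definition synchronizing : Prop :=
  exists w : seq A, exists q : Q, forall p : Q, delta_star p w = q.

End Automata.

(** Write [f := delta^~ b].  The length-one [b]-cycle is a loop, and since every
    cycle of a semi-flower automaton passes through [q0], that loop sits at [q0]:
    [q0] is a fixed point of [f].  The orbit of any state under [f] ends in an
    [f]-cycle, which is a cycle of [b]-edges of the automaton and therefore
    contains [q0]; as [q0] is fixed, that cycle is [q0] alone.  Hence [b^|Q|]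
    sends every state to [q0]. *)
From mathcomp Require Import all_boot.

Set Implicit Arguments.
Unset Strict Implicit.
Unset Printing Implicit Defensive.

Section FunctionalGraph.
Variables (T : finType) (f : T -> T).

Lemma iter_order_cycle_orbit x : fcycle f (orbit f (iter (order f x) f x)).
Proof.
have [i lt_i_order Ei] :
    exists2 i, i < order f x & iter i f x = iter (order f x) f x.
  have xz : fconnect f x (iter (order f x) f x) by apply: fconnect_iter.
  by exists (findex f x (iter (order f x) f x));
    [apply: findex_max | apply: iter_findex].
apply/(orbitPcycle 3 0); exists (order f x - i).-1.
by rewrite prednK ?subn_gt0 // -{1}Ei -iterD subnK // ltnW.
Qed.

Lemma fixpoint_in_cycle_orbit q0 z :
  f q0 = q0 -> fcycle f (orbit f z) -> q0 \in orbit f z -> z = q0.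
Proof.
move=> fq0 /(orbitPcycle 0 4) Ez; rewrite -fconnect_orbit => zq0.
rewrite -Ez -(subnK (ltnW (findex_max zq0))) iterD iter_findex //.
exact: iter_fix.
Qed.

Lemma iter_card_fixpoint q0 :
  f q0 = q0 -> (forall z, fcycle f (orbit f z) -> q0 \in orbit f z) ->
  forall x, iter #|T| f x = q0.
Proof.
move=> fq0 cycle_q0 x; have cyc := iter_order_cycle_orbit x.
rewrite -(subnK (max_card (fconnect f x))) iterD.
by rewrite (fixpoint_in_cycle_orbit fq0 cyc (cycle_q0 _ cyc)) iter_fix.
Qed.

End FunctionalGraph.

Section LetterAction.
Variables (Q A : finType) (delta : Q -> A -> Q) (b : A).

Lemma walk_constant_label p x s q :
  walk delta p [seq (r, b) | r <- x :: s] q =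
  (x == p) && fpath (delta^~ b) x (rcons s q).
Proof.
elim: s x p => [|y s IH] x p /=; first by rewrite andbT.
by have := IH y (delta x b); rewrite /= => ->; rewrite (eq_sym y).
Qed.

Lemma is_cycle_fcycle x s :
  fcycle (delta^~ b) (x :: s) -> uniq (x :: s) ->
  is_cycle delta [seq (r, b) | r <- x :: s].
Proof.
move=> cyc uniq_xs; have := walk_constant_label x x s x; rewrite eqxx /= => walk_xs.
by rewrite /is_cycle /= walk_xs -map_comp map_id; apply/andP.
Qed.

Lemma delta_star_nseq n p : delta_star delta p (nseq n b) = iter n (delta^~ b) p.
Proof. by rewrite /delta_star; elim: n p => [|n IH] p //=; rewrite IH -iterSr. Qed.

Variables (q0 : Q) (F : {set Q}).
Hypothesis flower : semi_flower delta q0 F.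

Lemma semi_flower_fcycle c :
  fcycle (delta^~ b) c -> uniq c -> c != [::] -> q0 \in c.
Proof.
case: flower => _ _ _ through_q0; case: c => [//|x s] cyc uniq_xs _.
have := through_q0 _ (is_cycle_fcycle cyc uniq_xs).
by rewrite -map_comp map_id.
Qed.

Lemma semi_flower_b_loop s : b_cycle delta b s -> size s = 1 -> delta q0 b = q0.
Proof.
case: flower => _ _ _ through_q0.
case: s => [|[p a] [|//]] //= /andP[cyc /andP[/eqP/= a_b _]] _.
move: cyc; rewrite /is_cycle /= andbT => /andP[_ /eqP loop_p].
have := through_q0 [:: (p, a)]; rewrite /is_cycle /= eqxx loop_p eqxx inE.
by move=> /(_ isT)/eqP ->; rewrite -a_b.
Qed.

End LetterAction.

Theorem mainTheorem2 (Q A : finType) (delta : Q -> A -> Q) (q0 : Q)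
  (F : {set Q}) (b : A) :
  semi_flower delta q0 F ->
  (exists s, b_cycle delta b s /\ size s = 1) ->
  synchronizing delta.
Proof.
move=> flower [s [bs size_s]].
have fq0 := semi_flower_b_loop flower bs size_s.
exists (nseq #|Q| b), q0 => p; rewrite delta_star_nseq.
apply: (iter_card_fixpoint fq0) => z cyc.
apply: (semi_flower_fcycle flower cyc (orbit_uniq _ _)).
by apply: contraTneq (in_orbit (delta^~ b) z) => ->.
Qed.
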